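(* In the setting of the context, assume $\log(n)q(n)\to\delta^*\in(0,\infty)$, $m(n)^{-1}\log n\to0$ and $m(n)^{-1}v_n\to\infty$. Let $i_U=\big\lceil m(n)\frac{H_0-H_-+q(n)}{H_+-H_-}+U\big\rceil$. Then $\mathbb P^n_{H_0,\sigma_0}(\widehat i_n=i_U)\to1$.
   Context: $\Theta=[H_-,H_+]\times[\sigma_-,\sigma_+]\subset(0,1)\times(0,\infty)$, $(H_0,\sigma_0)$ interior; under $\mathbb P^n_{H_0,\sigma_0}$ one has a pilot estimator $\widehat H_n$ of $H_0$ and a sequence $v_n\to\infty$ such that $v_n(\widehat H_n-H_0)$ is bounded in probability (in the paper, $\widehat H_n$ is the preaveraged Whittle estimator with window $k(n)=n^{2H_+/(2H_++1)}(1+o(1))$ and $v_n=n^{1/(4H_++2)}$); $q(n)>0$, $m(n)$ positive integers, $U$ a uniform random variable on $[0,1]$ independent of the data (hence of $\widehat H_n$); $\widehat i_n=\big\lceil m(n)\frac{\widehat H_n-H_-+q(n)}{H_+-H_-}+U\big\rceil$. *)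

From HB Require Import structures.
From mathcomp Require Import all_boot all_order all_algebra.
From mathcomp Require Import all_classical all_reals all_analysis.
Set Implicit Arguments. Unset Strict Implicit. Unset Printing Implicit Defensive.
Import Order.TTheory GRing.Theory Num.Theory.
Local Open Scope classical_set_scope.
Local Open Scope ring_scope.

Definition indep_RV d (T : measurableType d) (R : realType)
  (P : probability T R) (X Y : T -> R) : Prop :=
  forall A B : set R, measurable A -> measurable B ->
    P (X @^-1` A `&` Y @^-1` B) = (P (X @^-1` A) * P (Y @^-1` B))%E.

Definition bounded_in_prob d (T : nat -> measurableType d) (R : realType)
  (P : forall n, probability (T n) R) (X : forall n, T n -> R) : Prop :=
  forall e : R, 0 < e -> exists M : R, exists N : nat, forall n, (N <= n)%N ->
    (P n [set w | (M < `|X n w|)%R] <= e%:E)%E.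

(* Write ihat = ceil (x + U + D) and iU = ceil (x + U), where x is deterministic
   and D = m (Hhat - H0) / (H+ - H-). Since v (Hhat - H0) is tight and
   v / m -> +oo, |D| <= eps with probability close to 1. On that event the two
   ceilings can only differ if x + U lies within eps of an integer, and as U is
   uniform on [0, 1] this has probability at most 6 eps. *)

From HB Require Import structures.
From mathcomp Require Import all_boot all_order all_algebra.
From mathcomp Require Import all_classical all_reals all_analysis.
From mathcomp Require Import measurable_realfun ring lra zify.
Set Implicit Arguments. Unset Strict Implicit. Unset Printing Implicit Defensive.
Import Order.TTheory GRing.Theory Num.Theory.
Import numFieldNormedType.Exports.
Local Open Scope classical_set_scope.
Local Open Scope ring_scope.

Lemma ceil_shift_neq_near_int (R : realType) (y D : R) :
  Num.ceil (y + D) != Num.ceil y -> exists j : int, `|y - j%:~R| <= `|D|.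
Proof.
move=> hne; have [D0|D0] := leP 0 D.
- exists (Num.ceil y).
  have lt_ceil : Num.ceil y < Num.ceil (y + D).
    by rewrite lt_neqAle eq_sym hne le_ceil // lerDl.
  move: lt_ceil; rewrite ceil_gt_int => lt_ceil.
  have ge_ceil := ceil_ge y.
  by rewrite ler0_norm ?subr_le0 // ger0_norm //; lra.
- exists (Num.ceil y - 1).
  have lt_ceil : Num.ceil (y + D) < Num.ceil y.
    by rewrite lt_neqAle hne le_ceil // gerDl ltW.
  have : Num.ceil (y + D) <= Num.ceil y - 1 by lia.
  rewrite ceil_le_int => le_ceil1.
  have lt_ceil1 := ceilB1_lt y.
  by rewrite gtr0_norm ?subr_gt0 // ltr0_norm //; lra.
Qed.

Definition int_gap_window (R : realType) (x e : R) (i : nat) : set R :=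
  `[(Num.floor x)%:~R + i%:R - x - e, (Num.floor x)%:~R + i%:R - x + e]%classic.

Definition near_int_cover (R : realType) (x e : R) : set R :=
  ~` `[0%R, 1%R]%classic `|`
  (int_gap_window x e 0 `|` int_gap_window x e 1 `|` int_gap_window x e 2).

Lemma near_int_in_cover (R : realType) (x u e : R) (j : int) :
  e < 1 -> `|x + u - j%:~R| <= e -> near_int_cover x e u.
Proof.
move=> e1; rewrite ler_norml => /andP[je1 je2].
have [/andP[u0 u1]|u01] := boolP (0 <= u <= 1); last first.
  by left; rewrite /= in_itv /=; exact/negP.
right.
have := floor_le x; have := floorD1_gt x; rewrite intrD => fl1 fl2.
have lo : Num.floor x - 1 < j by rewrite -(ltr_int R) intrB; lra.
have hi : j < Num.floor x + 3 by rewrite -(ltr_int R) intrD; lra.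
have win : int_gap_window x e `|j - Num.floor x|%N u.
  rewrite /int_gap_window /= in_itv /=.
  have -> : `|j - Num.floor x|%N%:R = j%:~R - (Num.floor x)%:~R :> R.
    by rewrite -intrB natr_absz ger0_norm // subr_ge0; lia.
  by apply/andP; split; lra.
have : (`|j - Num.floor x| < 3)%N by lia.
by case: `|_|%N win => [|[|[|]]] win //; [left; left|left; right|right].
Qed.

Lemma measurable_near_int_cover (R : realType) (x e : R) :
  measurable (near_int_cover x e).
Proof.
by apply: measurableU; [apply: measurableC|do !apply: measurableU];
  exact: measurable_itv.
Qed.

Lemma lebesgue_int_gap_window (R : realType) (x e : R) (i : nat) : 0 < e ->
  lebesgue_measure (int_gap_window x e i) = (2 * e)%:E.
Proof.
move=> e0; rewrite lebesgue_measure_itv /= lte_fin ifT; last lra.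
by rewrite -EFinB; congr EFin; lra.
Qed.

Lemma uniform_prob_le_lebesgue (R : realType) (A : set R) : measurable A ->
  (uniform_prob (@ltr01 R) A <= lebesgue_measure (A `&` `[0%R, 1%R]%classic))%E.
Proof.
move=> mA; rewrite /uniform_prob integral_uniform_pdf.
rewrite (@eq_integral _ _ _ _ _ (cst 1%E)); last first.
  move=> x; rewrite inE /= => -[_]; rewrite in_itv /= /uniform_pdf => ->.
  by rewrite subr0 invr1.
by rewrite integral_cst ?mul1e //; apply: measurableI.
Qed.

Lemma uniform_prob_near_int_cover_le (R : realType) (x e : R) : 0 < e ->
  (uniform_prob (@ltr01 R) (near_int_cover x e) <= (6 * e)%:E)%E.
Proof.
move=> e0; set W := int_gap_window x e.
apply: (le_trans (uniform_prob_le_lebesgue (measurable_near_int_cover x e))).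
apply: (@le_trans _ _ (lebesgue_measure (W 0 `|` W 1 `|` W 2)%N)).
  apply: le_measure; rewrite ?inE.
  - exact: measurableI (measurable_near_int_cover x e) (measurable_itv _).
  - by do !apply: measurableU; exact: measurable_itv.
  - by move=> u [[notin01|] in01].
have le012 : (lebesgue_measure (W 0 `|` W 1 `|` W 2)%N <=
    lebesgue_measure (W 0 `|` W 1)%N + lebesgue_measure (W 2%N))%E.
  by apply: measureU2; [apply: measurableU|]; exact: measurable_itv.
have le01 : (lebesgue_measure (W 0 `|` W 1)%N <=
    lebesgue_measure (W 0%N) + lebesgue_measure (W 1%N))%E.
  by apply: measureU2; exact: measurable_itv.
apply: (le_trans le012); apply: (le_trans (leeD le01 (lexx _))).
by rewrite !lebesgue_int_gap_window // -!EFinD lee_fin; lra.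
Qed.

Lemma measurable_ceil_neq d (T : measurableType d) (R : realType) (f g : T -> R) :
  measurable_fun setT f -> measurable_fun setT g ->
  measurable [set w | Num.ceil (f w) != Num.ceil (g w)].
Proof.
move=> mf mg.
have mceil : measurable_fun setT (fun x : R => (Num.ceil x)%:~R : R).
  by apply: nondecreasing_measurable => // x y xy; rewrite ler_int le_ceil.
have -> : [set w | Num.ceil (f w) != Num.ceil (g w)] =
    (fun w => (Num.ceil (f w))%:~R == (Num.ceil (g w))%:~R :> R) @^-1` [set false].
  by apply/seteqP; split => w /=; rewrite eqr_int; [move/negbTE | move=> ->].
rewrite -[X in measurable X]setTI.
exact: (measurable_fun_eqr (measurableT_comp mceil mf) (measurableT_comp mceil mg)).
Qed.

Lemma measurable_lt_norm d (T : measurableType d) (R : realType) (X : T -> R) (e : R) :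
  measurable_fun setT X -> measurable [set w | e < `|X w|].
Proof.
move=> mX; rewrite -preimage_itvoy -[X in measurable X]setTI.
exact: (measurableT_comp (@normr_measurable R setT) mX) measurableT _ (measurable_itv _).
Qed.

Lemma prob_ceil_shift_neq_le d (T : measurableType d) (R : realType)
    (P : probability T R) (U : {RV P >-> R}) (X : T -> R) (x e : R) :
  (forall A, measurable A -> distribution P U A = uniform_prob (@ltr01 R) A) ->
  measurable_fun setT X -> 0 < e < 1 ->
  (P [set w | Num.ceil (x + U w + X w) != Num.ceil (x + U w)]
    <= P [set w | (e < `|X w|)%R] + (6 * e)%:E)%E.
Proof.
move=> hU mX /andP[e0 e1].
have mlarge : measurable [set w | e < `|X w|] by exact: measurable_lt_norm.
have mnear : measurable (U @^-1` near_int_cover x e).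
  exact: measurable_funPTI (measurable_near_int_cover x e).
apply: (@le_trans _ _ (P ([set w | e < `|X w|] `|` U @^-1` near_int_cover x e))).
  apply: le_measure; rewrite ?inE; [|exact: measurableU|].
  - by apply: measurable_ceil_neq; do ?apply: measurable_funD => //; exact: measurable_funP.
  - move=> w /= /ceil_shift_neq_near_int [j near_j].
    have [|small] := ltP e `|X w|; [by left | right].
    exact: near_int_in_cover e1 (le_trans near_j small).
apply: (le_trans (measureU2 _ mlarge mnear)); apply: leeD => //.
change (distribution P U (near_int_cover x e) <= (6 * e)%:E)%E.
rewrite hU; [exact: uniform_prob_near_int_cover_le|exact: measurable_near_int_cover].
Qed.

Lemma cvg_prob_setC_to1 d (T : nat -> measurableType d) (R : realType)
    (P : forall n, probability (T n) R) (B : forall n, set (T n)) :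
  (forall n, measurable (B n)) ->
  (forall e : R, 0 < e -> \forall n \near \oo, (P n (B n) <= e%:E)%E) ->
  (fun n => P n (~` B n)) @ \oo --> 1%E.
Proof.
move=> mB small; apply: cvg_EFin.
  by near=> n; apply: fin_num_measure; exact: measurableC (mB n).
apply/cvgrPdist_le => e e0; near=> n.
have : (P n (B n) <= e%:E)%E by near: n; exact: small.
have : (0 <= P n (B n))%E by exact: measure_ge0.
rewrite /= probability_setC // -[P n (B n)]fineK; last by apply: fin_num_measure; exact: mB.
rewrite -EFinB /= !lee_fin => p0 pe.
by rewrite opprB addrC subrK ger0_norm.
Unshelve. all: by end_near.
Qed.

Lemma scaled_error_le (R : realFieldType) (m c v a M e : R) :
  0 < m -> 0 < c -> 0 < e -> `|M| / (e * c) < v / m -> `|v * a| <= M ->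
  `|m * a / c| <= e.
Proof.
move=> m0 c0 e0; set r := v / m => Mr vaM.
have ec0 : 0 < e * c by exact: mulr_gt0.
have r0 : 0 < r by apply: le_lt_trans Mr; rewrite divr_ge0 // ltW.
have vE : v = r * m by rewrite /r divfK // gt_eqF.
move: Mr vaM; rewrite ltr_pdivrMr // vE normrM (gtr0_norm (mulr_gt0 r0 m0)).
rewrite !normrM normfV (gtr0_norm m0) (gtr0_norm c0) ler_pdivrMr //.
have := ler_norm M; have := normr_ge0 a; nra.
Qed.

Lemma prob_scaled_dev_le d (T : measurableType d) (R : realType)
    (P : probability T R) (Y : T -> R) (m c v M e : R) :
  measurable_fun setT Y -> 0 < m -> 0 < c -> 0 < e -> `|M| / (e * c) < v / m ->
  (P [set w | (e < `|m * Y w / c|)%R] <= P [set w | (M < `|v * Y w|)%R])%E.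
Proof.
move=> mY m0 c0 e0 large_vm.
apply: le_measure; rewrite ?inE.
- apply: measurable_lt_norm; apply: measurable_funM => //; exact: measurable_funM.
- exact/measurable_lt_norm/measurable_funM.
- move=> w /=; apply: contraTT; rewrite -!leNgt => small.
  exact: scaled_error_le small.
Qed.

Theorem lemma6p3 (R : realType)
  (Hm Hp sm sp H0 s0 : R)
  (hHm : 0 < Hm) (hHmp : Hm < Hp) (hHp : Hp < 1)
  (hsm : 0 < sm) (hsmp : sm < sp)
  (hH0 : Hm < H0 < Hp) (hs0 : sm < s0 < sp)
  (d : measure_display) (Omega : nat -> measurableType d)
  (P : forall n, probability (Omega n) R)
  (Hhat : forall n, {RV (P n) >-> R})
  (U : forall n, {RV (P n) >-> R})
  (v : nat -> R) (q : nat -> R) (m : nat -> nat) (delta : R)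
  (hU : forall n A, measurable A ->
          distribution (P n) (U n) A = uniform_prob (@ltr01 R) A)
  (hindep : forall n, indep_RV (P n) (Hhat n) (U n))
  (hv : v @ \oo --> +oo)
  (htight : bounded_in_prob P (fun n w => v n * (Hhat n w - H0)))
  (hq : forall n, 0 < q n)
  (hm : forall n, (0 < m n)%N)
  (hdelta : 0 < delta)
  (hlogq : (fun n : nat => ln n%:R * q n) @ \oo --> delta)
  (hlogm : (fun n : nat => ln n%:R / (m n)%:R) @ \oo --> (0 : R))
  (hvm : (fun n : nat => v n / (m n)%:R) @ \oo --> +oo) :
  let ihat n w := Num.ceil ((m n)%:R * ((Hhat n w - Hm + q n) / (Hp - Hm)) + U n w) in
  let iU n w := Num.ceil ((m n)%:R * ((H0 - Hm + q n) / (Hp - Hm)) + U n w) in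
  (fun n => P n [set w | ihat n w = iU n w]) @ \oo --> (1 : \bar R)%E.
Proof.
move=> ihat iU.
have c0 : 0 < Hp - Hm by rewrite subr_gt0.
pose x n := (m n)%:R * ((H0 - Hm + q n) / (Hp - Hm)).
pose D n w := (m n)%:R * (Hhat n w - H0) / (Hp - Hm).
pose B n := [set w | Num.ceil (x n + U n w + D n w) != Num.ceil (x n + U n w)].
have mD n : measurable_fun setT (D n).
  apply: measurable_funM => //; apply: measurable_funM => //.
  exact: measurable_funB.
have ihatE n w : ihat n w = Num.ceil (x n + U n w + D n w).
  by rewrite /ihat; congr Num.ceil; rewrite /x /D; field; exact: lt0r_neq0.
have -> : (fun n => P n [set w | ihat n w = iU n w]) = fun n => P n (~` B n).
  apply/funext => n; congr (P n _); apply/seteqP.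
  split => w /=; rewrite ihatE /B /=; first by move=> ->; rewrite eqxx.
  by move/negP/negbNE/eqP.
apply: cvg_prob_setC_to1.
  by move=> n; apply: measurable_ceil_neq; do ?apply: measurable_funD => //;
    exact: measurable_funP.
move=> e e0.
pose eps := Num.min (e / 12) (1 / 2).
have eps0 : 0 < eps by rewrite lt_min !divr_gt0.
have eps_e : eps <= e / 12 by rewrite ge_min lexx.
have eps_half : eps <= 1 / 2 by rewrite ge_min lexx orbT.
have eps01 : 0 < eps < 1 by rewrite eps0 /=; lra.
have [M [N tightMN]] := htight (e / 2) (divr_gt0 e0 (ltr0Sn _ 1)).
move/cvgryPgt: hvm => /(_ (`|M| / (eps * (Hp - Hm)))) large_vm.
near=> n.
have large_dev : (P n [set w | (eps < `|D n w|)%R] <= (e / 2)%:E)%E.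
  apply: le_trans (tightMN n _); last by near: n; exact: nbhs_infty_ge.
  apply: prob_scaled_dev_le => //; first exact: measurable_funB.
    by rewrite ltr0n.
  by near: n.
apply: (le_trans (prob_ceil_shift_neq_le (x n) (hU n) (mD n) eps01)).
by apply: (le_trans (leeD large_dev (lexx _))); rewrite -EFinD lee_fin; lra.
Unshelve. all: by end_near.
Qed.
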